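(* Let $\Gamma=S(\Lambda,V)$ and let $\sigma\in Z^2(\Gamma,U(1))$ be a 2-cocycle. Then $\sigma$ is cohomologous to a real cocycle, that is, to an element of $Z^2(\Gamma,U(1))$ of the form $\exp(2\pi i\zeta)$ with $\zeta\in Z^2(\Gamma,\mathbb{R})$.
   Context: Let $\mathbb{K}$ be a real quadratic field with real embeddings $\iota_1,\iota_2$. Let $L\subset\mathbb{K}$ be a lattice (free $\mathbb{Z}$-module of rank 2 spanning $\mathbb{K}$), and $V=\epsilon^{\mathbb{Z}}$ the group of totally positive units $u$ with $uL\subset L$, or a finite index subgroup, with $\epsilon=\iota_1(\epsilon)>1$, $\iota_2(\epsilon)=\epsilon^{-1}$. Let $\Lambda=\{(\iota_1(\ell),\iota_2(\ell)):\ell\in L\}\subset\mathbb{R}^2$, $A_\epsilon=\mathrm{diag}(\epsilon,\epsilon^{-1})$, and $S(\Lambda,V)=\Lambda\rtimes\mathbb{Z}$ with product $(\lambda,k)(\eta,r)=(\lambda+A_\epsilon^k\eta,k+r)$. Group cohomology with coefficients in $U(1)$, $\mathbb{R}$, $\mathbb{Z}$ is with trivial action. *)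

From Stdlib Require Import Reals QArith ZArith Lra.
From Coquelicot Require Import Coquelicot.
Open Scope R_scope.

(** Real quadratic field K = Q(sqrt d), d a non-square natural number.
    An element a + b sqrt d of K is represented by its coordinates (a,b) : Q*Q. *)
Definition nonsquare (d : nat) : Prop := ~ (exists k : nat, (k * k)%nat = d).

Definition Kel := (Q * Q)%type.

Definition iota1 (d : nat) (x : Kel) : R := Q2R (fst x) + Q2R (snd x) * sqrt (INR d).
Definition iota2 (d : nat) (x : Kel) : R := Q2R (fst x) - Q2R (snd x) * sqrt (INR d).

Definition Kmul (d : nat) (x y : Kel) : Kel :=
  ((fst x * fst y + inject_Z (Z.of_nat d) * snd x * snd y)%Q,
   (fst x * snd y + snd x * fst y)%Q).

Definition Keq (x y : Kel) : Prop := (fst x == fst y)%Q /\ (snd x == snd y)%Q.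

Definition Zcomb (m n : Z) (w1 w2 : Kel) : Kel :=
  ((inject_Z m * fst w1 + inject_Z n * fst w2)%Q,
   (inject_Z m * snd w1 + inject_Z n * snd w2)%Q).

(** The lattice L = Z w1 + Z w2; it is a lattice (spans K over Q) iff w1,w2
    are Q-linearly independent. *)
Definition spans_K (w1 w2 : Kel) : Prop :=
  ~ (fst w1 * snd w2 - fst w2 * snd w1 == 0)%Q.

Definition inL (w1 w2 : Kel) (l : Kel) : Prop := exists m n : Z, Keq l (Zcomb m n w1 w2).

Definition stabilizes (d : nat) (w1 w2 u : Kel) : Prop :=
  forall l, inL w1 w2 l -> inL w1 w2 (Kmul d u l).

Definition inLambda (d : nat) (w1 w2 : Kel) (x : R * R) : Prop :=
  exists l, inL w1 w2 l /\ x = (iota1 d l, iota2 d l).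

(** The group Gamma = S(Lambda, V) = Lambda ⋊ Z, elements ((x1,x2),k). *)
Definition Gam := ((R * R) * Z)%type.

Definition inGamma (d : nat) (w1 w2 : Kel) (g : Gam) : Prop := inLambda d w1 w2 (fst g).

(* A_eps^k applied to y, with e = iota1 eps *)
Definition Apow (e : R) (k : Z) (y : R * R) : R * R :=
  (powerRZ e k * fst y, powerRZ e (- k) * snd y).

Definition Gmul (e : R) (g h : Gam) : Gam :=
  let y := Apow e (snd g) (fst h) in
  ((fst (fst g) + fst y, snd (fst g) + snd y), (snd g + snd h)%Z).

Definition is_U1_cocycle (G : Gam -> Prop) (mul : Gam -> Gam -> Gam)
    (s : Gam -> Gam -> C) : Prop :=
  (forall g h, G g -> G h -> Cmod (s g h) = 1) /\
  (forall g h k, G g -> G h -> G k ->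
     Cmult (s g h) (s (mul g h) k) = Cmult (s h k) (s g (mul h k))).

Definition is_R_cocycle (G : Gam -> Prop) (mul : Gam -> Gam -> Gam)
    (z : Gam -> Gam -> R) : Prop :=
  forall g h k, G g -> G h -> G k ->
     z g h + z (mul g h) k = z h k + z g (mul h k).

Definition e2pi (t : R) : C := (cos (2 * PI * t), sin (2 * PI * t)).

Definition cohomologous (G : Gam -> Prop) (mul : Gam -> Gam -> Gam)
    (s s' : Gam -> Gam -> C) : Prop :=
  exists beta : Gam -> C,
    (forall g, G g -> Cmod (beta g) = 1) /\
    (forall g h, G g -> G h ->
       s g h = Cmult (s' g h) (Cmult (Cmult (beta g) (beta h)) (Cinv (beta (mul g h))))).

(* Write sigma = exp(2 pi i th): then th is a 2-cocycle modulo Z, and it suffices to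
   show that th is cohomologous modulo Z to the real cocycle
   zeta_r((x,k),(y,l)) = r x1 eps^-k y2.  Because H^2(Z, R/Z) = 0, a cocycle on a
   semidirect product N x| Z can be normalised to vanish on N x Z and Z x Z, and it is
   then determined by its values on Z x N and N x N.  For Lambda = Z p + Z q this shows
   that every R/Z-cocycle on Lambda is cohomologous to r x1 y2.  On Gamma = Lambda x| Z
   what is left is m |-> th(t, m), a homomorphism Lambda -> R/Z; it lifts to a linear
   form u, and subtracting the coboundary of w = u (1 - A_eps)^-1 (which exists since
   eps <> 1) makes it vanish.  Induction on k then kills th(t^k, m). *)

From Stdlib Require Import Reals QArith ZArith Lra Lia Qreals ClassicalEpsilon.
From Coquelicot Require Import Coquelicot.
Open Scope R_scope.

Definition isint (r : R) : Prop := exists z : Z, r = IZR z.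
Definition eqz (x y : R) : Prop := isint (x - y).

Lemma isint_IZR z : isint (IZR z). Proof. exists z; reflexivity. Qed.

Lemma isint_add a b : isint a -> isint b -> isint (a + b).
Proof. intros [m ->] [n ->]; exists (m + n)%Z; rewrite plus_IZR; reflexivity. Qed.

Lemma isint_sub a b : isint a -> isint b -> isint (a - b).
Proof. intros [m ->] [n ->]; exists (m - n)%Z; rewrite minus_IZR; reflexivity. Qed.

Lemma isint_mulz z a : isint a -> isint (IZR z * a).
Proof. intros [m ->]; exists (z * m)%Z; rewrite mult_IZR; reflexivity. Qed.

Lemma isint_eq a b : a = b -> isint a -> isint b. Proof. intros ->; auto. Qed.

Notation "H ⊕ K" := (isint_add _ _ H K) (at level 50, left associativity).
Notation "H ⊖ K" := (isint_sub _ _ H K) (at level 50, left associativity).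

(* Proves a congruence mod Z from a signed sum [t] of known congruences whose
   difference from the goal is a ring identity. *)
Ltac eqz_by t := unfold eqz in *; eapply isint_eq; [|exact t]; ring.

Lemma eqz_eq x y : x = y -> eqz x y.
Proof. intros ->; exists 0%Z; ring. Qed.

Lemma eqz_sym x y : eqz x y -> eqz y x.
Proof. intro H; eqz_by (isint_IZR 0 ⊖ H). Qed.

Lemma eqz_trans x y z : eqz x y -> eqz y z -> eqz x z.
Proof. intros H K; eqz_by (H ⊕ K). Qed.

Lemma eqz_add a b c d : eqz a b -> eqz c d -> eqz (a + c) (b + d).
Proof. intros H K; eqz_by (H ⊕ K). Qed.

Lemma eqz_mulz z a b : eqz a b -> eqz (IZR z * a) (IZR z * b).
Proof. intro H; eqz_by (isint_mulz z _ H). Qed.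

Lemma e2pi_add x y : e2pi (x + y) = Cmult (e2pi x) (e2pi y).
Proof.
  unfold e2pi, Cmult; simpl. replace (2 * PI * (x + y)) with (2 * PI * x + 2 * PI * y) by ring.
  rewrite cos_plus, sin_plus. f_equal; ring.
Qed.

Lemma cos2_sin2 x : cos x * cos x + sin x * sin x = 1.
Proof. rewrite <- (sin2_cos2 x); unfold Rsqr; ring. Qed.

Lemma Cmod_e2pi x : Cmod (e2pi x) = 1.
Proof.
  unfold e2pi, Cmod; simpl. rewrite !Rmult_1_r, cos2_sin2. apply sqrt_1.
Qed.

Lemma Cinv_e2pi x : Cinv (e2pi x) = e2pi (- x).
Proof.
  unfold e2pi, Cinv; simpl. replace (2 * PI * - x) with (- (2 * PI * x)) by ring.
  rewrite cos_neg, sin_neg, !Rmult_1_r, cos2_sin2. f_equal; field.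
Qed.

Lemma e2pi_IZR z : e2pi (IZR z) = (1, 0).
Proof.
  unfold e2pi. replace (2 * PI * IZR z) with (2 * (IZR z * PI)) by ring.
  assert (H : sin (IZR z * PI) = 0) by (apply sin_eq_0_1; eauto).
  rewrite cos_2a_sin, sin_2a, H. f_equal; ring.
Qed.

Lemma e2pi_eqz x y : eqz x y -> e2pi x = e2pi y.
Proof.
  intros [z Hz]. replace x with (y + IZR z) by lra. rewrite e2pi_add, e2pi_IZR.
  destruct (e2pi y) as [u v]; unfold Cmult; simpl; f_equal; ring.
Qed.

Lemma e2pi_inj x y : e2pi x = e2pi y -> eqz x y.
Proof.
  unfold e2pi; intro H. injection H as Hc Hs.
  assert (Hc2 : cos (2 * (PI * (x - y))) = 1).
  { replace (2 * (PI * (x - y))) with (2 * PI * x - 2 * PI * y) by ring.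
    rewrite cos_minus, Hc, Hs. apply cos2_sin2. }
  rewrite cos_2a_sin in Hc2.
  assert (Hs0 : sin (PI * (x - y)) = 0) by (apply Rsqr_0_uniq; unfold Rsqr; lra).
  destruct (sin_eq_0_0 _ Hs0) as [k Hk]. exists k. pose proof PI_RGT_0.
  apply (Rmult_eq_reg_l PI); [|lra]. rewrite Hk; ring.
Qed.

Lemma Cmod_1_e2pi (z : C) : Cmod z = 1 -> exists t, z = e2pi t.
Proof.
  destruct z as [x y]; unfold Cmod; simpl; intro H.
  assert (H1 : x * x + y * y = 1).
  { rewrite !Rmult_1_r in H. rewrite <- (sqrt_sqrt (x * x + y * y)) by nra. rewrite H; ring. }
  assert (Hx : -1 <= x <= 1) by nra. pose proof PI_RGT_0.
  destruct (Rle_or_lt 0 y) as [Hy|Hy].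
  - exists (acos x / (2 * PI)). unfold e2pi.
    replace (2 * PI * (acos x / (2 * PI))) with (acos x) by (field; lra).
    rewrite cos_acos, sin_acos by auto. f_equal.
    replace (1 - x²) with (y * y) by (unfold Rsqr; lra). rewrite sqrt_square; auto.
  - exists (- acos x / (2 * PI)). unfold e2pi.
    replace (2 * PI * (- acos x / (2 * PI))) with (- acos x) by (field; lra).
    rewrite cos_neg, sin_neg, cos_acos, sin_acos by auto. f_equal.
    replace (1 - x²) with ((- y) * (- y)) by (unfold Rsqr; lra). rewrite sqrt_square; lra.
Qed.

Lemma U1_valued_log {T : Type} (inG : T -> Prop) (s : T -> T -> C) :
  (forall g h, inG g -> inG h -> Cmod (s g h) = 1) ->
  exists th : T -> T -> R, forall g h, inG g -> inG h -> s g h = e2pi (th g h).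
Proof.
  intro Hmod.
  assert (Hlog : forall gh : T * T, exists t, inG (fst gh) -> inG (snd gh) -> s (fst gh) (snd gh) = e2pi t).
  { intros [g h]. destruct (classic (inG g /\ inG h)) as [[Hg Hh]|Hn].
    - destruct (Cmod_1_e2pi _ (Hmod g h Hg Hh)) as [t Ht]. exists t; auto.
    - exists 0; simpl; tauto. }
  destruct (ClassicalEpsilon.choice _ Hlog) as [f Hf]. exists (fun g h => f (g, h)).
  intros g h; exact (Hf (g, h)).
Qed.

(* R/Z-valued cochains are real-valued functions read modulo Z (via [eqz]);
   coboundaries are taken of real-valued 1-cochains. *)
Section CohomologyModZ.
Context {T : Type} (inG : T -> Prop) (mul : T -> T -> T).

Definition cocycle_modZ (th : T -> T -> R) : Prop :=
  forall g h k, inG g -> inG h -> inG k ->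
    eqz (th g h + th (mul g h) k) (th h k + th g (mul h k)).

Definition cohomologous_modZ (th th' : T -> T -> R) : Prop :=
  exists b : T -> R, forall g h, inG g -> inG h ->
    eqz (th g h) (th' g h + (b g + b h - b (mul g h))).

Lemma cohomologous_modZ_trans th1 th2 th3 :
  cohomologous_modZ th1 th2 -> cohomologous_modZ th2 th3 -> cohomologous_modZ th1 th3.
Proof.
  intros [b1 H1] [b2 H2]. exists (fun g => b1 g + b2 g). intros g h Hg Hh.
  eqz_by (H1 g h Hg Hh ⊕ H2 g h Hg Hh).
Qed.

Lemma cohomologous_modZ_pointwise th th' :
  (forall g h, inG g -> inG h -> eqz (th g h) (th' g h)) -> cohomologous_modZ th th'.
Proof. intro H. exists (fun _ => 0). intros g h Hg Hh. eqz_by (H g h Hg Hh). Qed.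

Lemma cohomologous_modZ_coboundary th th' (b : T -> R) :
  (forall g h, th g h = th' g h + (b g + b h - b (mul g h))) -> cohomologous_modZ th th'.
Proof. intro H. exists b. intros; apply eqz_eq; auto. Qed.

Hypothesis mul_closed : forall g h, inG g -> inG h -> inG (mul g h).
Hypothesis mul_assoc : forall g h k, mul (mul g h) k = mul g (mul h k).

Lemma cocycle_modZ_cohomologous th th' :
  cocycle_modZ th -> cohomologous_modZ th th' -> cocycle_modZ th'.
Proof.
  intros Hc [b Hb] g h k Hg Hh Hk.
  pose proof (Hb (mul g h) k (mul_closed _ _ Hg Hh) Hk) as E1.
  pose proof (Hb g (mul h k) Hg (mul_closed _ _ Hh Hk)) as E2.
  rewrite mul_assoc in E1.
  eqz_by (Hc g h k Hg Hh Hk ⊕ E2 ⊖ Hb g h Hg Hh ⊖ E1 ⊕ Hb h k Hh Hk).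
Qed.

Variable one : T.
Hypothesis one_in : inG one.
Hypothesis mul1g : forall g, mul one g = g.
Hypothesis mulg1 : forall g, mul g one = g.

Lemma cocycle_modZ_one_l th g : cocycle_modZ th -> inG g -> eqz (th one g) (th one one).
Proof.
  intros Hc Hg. pose proof (Hc one one g one_in one_in Hg) as H. rewrite !mul1g in H.
  eqz_by (isint_IZR 0 ⊖ H).
Qed.

Lemma cocycle_modZ_one_r th g : cocycle_modZ th -> inG g -> eqz (th g one) (th one one).
Proof.
  intros Hc Hg. pose proof (Hc g one one Hg one_in one_in) as H. rewrite !mulg1 in H.
  eqz_by H.
Qed.

End CohomologyModZ.

Fixpoint sum_pos (h : Z -> R) (k : nat) : R :=
  match k with O => 0 | S k' => sum_pos h k' + h (Z.of_nat k') end.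
Fixpoint sum_neg (h : Z -> R) (k : nat) : R :=
  match k with O => 0 | S k' => sum_neg h k' - h (- Z.of_nat (S k'))%Z end.

Lemma Z_antidifference (h : Z -> R) : exists b : Z -> R, forall n, b (n + 1)%Z = b n + h n.
Proof.
  exists (fun n => if (0 <=? n)%Z then sum_pos h (Z.to_nat n) else sum_neg h (Z.to_nat (- n))).
  intro n. destruct (Z.leb_spec 0 n), (Z.leb_spec 0 (n + 1)); try lia.
  - replace (Z.to_nat (n + 1)) with (S (Z.to_nat n)) by lia. simpl.
    rewrite Z2Nat.id by lia. reflexivity.
  - assert (n = -1)%Z by lia. subst. simpl. ring.
  - replace (Z.to_nat (- n)) with (S (Z.to_nat (- (n + 1)))) by lia. cbn [sum_neg].
    replace (- Z.of_nat (S (Z.to_nat (- (n + 1)))))%Z with n by lia. ring.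
Qed.

Notation Zall := (fun _ : Z => True).

Lemma Z_cocycle_modZ_vanishes (g : Z -> Z -> R) :
  cocycle_modZ Zall Z.add g -> (forall n, g 1%Z n = 0) -> forall m n, eqz (g m n) 0.
Proof.
  intros Hc Hg1.
  assert (Hc' : forall k l m, eqz (g k l + g (k + l)%Z m) (g l m + g k (l + m)%Z)) by (intros; apply Hc; auto).
  assert (H00 : eqz (g 0%Z 0%Z) 0).
  { pose proof (Hc' 1%Z 0%Z 0%Z) as H. simpl in H. rewrite !Hg1 in H. eqz_by (isint_IZR 0 ⊖ H). }
  intro m; induction m as [|m IH|m IH] using Z.peano_ind; intro n.
  - pose proof (Hc' 0%Z 0%Z n) as H. simpl in H. eqz_by (H00 ⊖ H).
  - pose proof (Hc' 1%Z m n) as H. rewrite !Hg1, Z.add_1_l in H. eqz_by (H ⊕ IH n).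
  - pose proof (Hc' 1%Z (Z.pred m) n) as H. rewrite !Hg1 in H.
    replace (1 + Z.pred m)%Z with m in H by lia. eqz_by (IH n ⊖ H).
Qed.

Lemma Z_cocycle_modZ_trivial (f : Z -> Z -> R) :
  cocycle_modZ Zall Z.add f -> cohomologous_modZ Zall Z.add f (fun _ _ => 0).
Proof.
  intro Hf.
  destruct (Z_antidifference (fun n => - f 1%Z n)) as [b0 Hb0].
  set (b := fun n => b0 n - b0 1%Z).
  set (g := fun k l => f k l - (b k + b l - b (k + l)%Z)).
  assert (Hg : cohomologous_modZ Zall Z.add f g).
  { apply (cohomologous_modZ_coboundary _ _ _ _ b). intros; unfold g; ring. }
  assert (Hg1 : forall n, g 1%Z n = 0).
  { intro n. unfold g, b. rewrite Z.add_comm, Hb0. ring. }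
  pose proof (Z_cocycle_modZ_vanishes g
    (cocycle_modZ_cohomologous _ _ (fun _ _ _ _ => I)
      (fun k l m => eq_sym (Z.add_assoc k l m)) _ _ Hf Hg) Hg1) as H0.
  exists b. intros k l _ _. pose proof (H0 k l) as H. unfold g in H. eqz_by H.
Qed.

Lemma Z_additive_modZ_linear (h : Z -> R) :
  (forall a b, eqz (h (a + b)%Z) (h a + h b)) -> forall a, eqz (h a) (IZR a * h 1%Z).
Proof.
  intros Hadd a. induction a as [|a IH|a IH] using Z.peano_ind.
  - pose proof (Hadd 0%Z 0%Z) as H. simpl in H. eqz_by (isint_IZR 0 ⊖ H).
  - rewrite <- Z.add_1_r, plus_IZR. eqz_by (Hadd a 1%Z ⊕ IH).
  - pose proof (Hadd (Z.pred a) 1%Z) as H. rewrite Z.add_1_r, Z.succ_pred in H.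
    replace (IZR (Z.pred a)) with (IZR a - 1) by (rewrite <- Z.sub_1_r, minus_IZR; reflexivity).
    eqz_by (IH ⊖ H).
Qed.

Section SemidirectZ.
Context {T : Type} (inG : T -> Prop) (mul : T -> T -> T) (one : T).
Hypothesis mul_closed : forall g h, inG g -> inG h -> inG (mul g h).
Hypothesis mul_assoc : forall g h k, mul (mul g h) k = mul g (mul h k).
Hypothesis one_in : inG one.
Hypothesis mul1g : forall g, mul one g = g.
Hypothesis mulg1 : forall g, mul g one = g.

(* The group is N x| Z: [t] embeds Z, every [n * t k] with [n] in N has components
   [nf] and [kf], and [act k] is conjugation by [t k] restricted to N. *)
Variables (inN : T -> Prop) (t : Z -> T) (act : Z -> T -> T) (nf : T -> T) (kf : T -> Z).
Hypothesis N_sub : forall n, inN n -> inG n.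
Hypothesis N_mul : forall n m, inN n -> inN m -> inN (mul n m).
Hypothesis N_one : inN one.
Hypothesis t_in : forall k, inG (t k).
Hypothesis t_add : forall k l, mul (t k) (t l) = t (k + l).
Hypothesis t_0 : t 0%Z = one.
Hypothesis nf_mul : forall n k, inN n -> nf (mul n (t k)) = n.
Hypothesis kf_mul : forall n k, inN n -> kf (mul n (t k)) = k.
Hypothesis act_N : forall k n, inN n -> inN (act k n).
Hypothesis t_conj : forall k n, inN n -> mul (t k) n = mul (act k n) (t k).

Definition normal_modZ (th : T -> T -> R) : Prop :=
  (forall n k, inN n -> eqz (th n (t k)) 0) /\ (forall k l, eqz (th (t k) (t l)) 0).

Let nf_N n : inN n -> nf n = n.
Proof. intros. rewrite <- (mulg1 n) at 1. rewrite <- t_0. auto. Qed.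
Let kf_N n : inN n -> kf n = 0%Z.
Proof. intros. rewrite <- (mulg1 n) at 1. rewrite <- t_0. auto. Qed.
Let nf_t k : nf (t k) = one.
Proof. rewrite <- (mul1g (t k)). auto. Qed.
Let kf_t k : kf (t k) = k.
Proof. rewrite <- (mul1g (t k)). auto. Qed.

Lemma cocycle_modZ_normalize th : cocycle_modZ inG mul th ->
  exists th', cohomologous_modZ inG mul th th' /\ cocycle_modZ inG mul th' /\ normal_modZ th'.
Proof.
  intro Hth.
  destruct (Z_cocycle_modZ_trivial (fun k l => th (t k) (t l))) as [bz Hbz].
  { intros k l m _ _ _. pose proof (Hth (t k) (t l) (t m) (t_in k) (t_in l) (t_in m)) as H.
    rewrite !t_add in H. exact H. }
  set (th1 := fun g h => th g h - (bz (kf g) + bz (kf h) - bz (kf (mul g h)))).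
  assert (C1 : cohomologous_modZ inG mul th th1).
  { apply (cohomologous_modZ_coboundary _ _ _ _ (fun g => bz (kf g))). intros; unfold th1; ring. }
  assert (Hth1 : cocycle_modZ inG mul th1) by (apply (cocycle_modZ_cohomologous _ _ mul_closed mul_assoc th); auto).
  assert (Ht1 : forall k l, eqz (th1 (t k) (t l)) 0).
  { intros k l. unfold th1. rewrite t_add, !kf_t. eqz_by (Hbz k l I I). }
  set (b2 := fun g => th1 (nf g) (t (kf g))).
  set (th2 := fun g h => th1 g h + (b2 g + b2 h - b2 (mul g h))).
  exists th2.
  assert (C2 : cohomologous_modZ inG mul th1 th2).
  { apply (cohomologous_modZ_coboundary _ _ _ _ (fun g => - b2 g)). intros; unfold th2; ring. }
  assert (Hl : forall g, inG g -> eqz (th1 one g) (th1 one one))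
    by (intros; apply (cocycle_modZ_one_l inG mul one); auto).
  assert (H11 : eqz (th1 one one) 0) by (rewrite <- t_0; apply Ht1).
  split; [apply (cohomologous_modZ_trans _ _ _ th1); auto|].
  split; [apply (cocycle_modZ_cohomologous _ _ mul_closed mul_assoc th1); auto|].
  split.
  - intros n k Hn. unfold th2, b2.
    rewrite nf_mul, kf_mul, nf_N, kf_N, nf_t, kf_t, t_0 by auto.
    pose proof (cocycle_modZ_one_r _ _ one one_in mulg1 th1 n Hth1 (N_sub n Hn)) as Hr.
    eqz_by (Hr ⊕ Hl (t k) (t_in k) ⊕ H11 ⊕ H11).
  - intros k l. unfold th2, b2. rewrite t_add, !nf_t, !kf_t.
    eqz_by (Ht1 k l ⊕ Hl _ (t_in k) ⊖ Hl _ (t_in (k + l)) ⊕ Hl _ (t_in l) ⊕ H11).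
Qed.

Lemma normal_cocycle_modZ_decomp th : cocycle_modZ inG mul th -> normal_modZ th ->
  forall n m k l, inN n -> inN m ->
  eqz (th (mul n (t k)) (mul m (t l))) (th (t k) m + th n (act k m)).
Proof.
  intros Hc [N1 N2] n m k l Hn Hm.
  assert (Gn := N_sub _ Hn). assert (Gm := N_sub _ Hm).
  assert (Ha := act_N k _ Hm). assert (Ga := N_sub _ Ha).
  pose proof (Hc n (t k) (mul m (t l)) Gn (t_in k) (mul_closed _ _ Gm (t_in l))) as C1.
  assert (E : mul (t k) (mul m (t l)) = mul (act k m) (t (k + l))).
  { rewrite <- mul_assoc, t_conj, mul_assoc, t_add by auto. reflexivity. }
  rewrite E in C1.
  pose proof (Hc n (act k m) (t (k + l)) Gn Ga (t_in _)) as C2.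
  pose proof (Hc (t k) m (t l) (t_in k) Gm (t_in l)) as C3.
  rewrite t_conj in C3 by auto.
  pose proof (Hc (act k m) (t k) (t l) Ga (t_in k) (t_in l)) as C4.
  rewrite t_add in C4.
  eqz_by (C1 ⊖ C2 ⊖ C3 ⊕ C4 ⊖ N1 n k Hn ⊕ N1 _ (k + l)%Z (N_mul _ _ Hn Ha)
          ⊖ N1 m l Hm ⊖ N1 _ k Ha ⊕ N2 k l).
Qed.

End SemidirectZ.

Definition vadd (x y : R * R) : R * R := (fst x + fst y, snd x + snd y).

Lemma pair_eq (a b c d : R) : a = c -> b = d -> (a, b) = (c, d).
Proof. intros -> ->; reflexivity. Qed.

Lemma vadd_assoc x y z : vadd (vadd x y) z = vadd x (vadd y z).
Proof. apply pair_eq; simpl; ring. Qed.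
Lemma vadd_comm x y : vadd x y = vadd y x.
Proof. apply pair_eq; simpl; ring. Qed.
Lemma vadd_0l x : vadd (0, 0) x = x.
Proof. destruct x; apply pair_eq; simpl; ring. Qed.
Lemma vadd_0r x : vadd x (0, 0) = x.
Proof. destruct x; apply pair_eq; simpl; ring. Qed.

Lemma Int_part_IZR z : Int_part (IZR z) = z.
Proof. symmetry; apply Int_part_spec; lra. Qed.

Section Lattice.
Variables p1 p2 q1 q2 : R.
Hypothesis det_neq0 : p1 * q2 - q1 * p2 <> 0.

Definition lattice_vec (m n : Z) : R * R := (IZR m * p1 + IZR n * q1, IZR m * p2 + IZR n * q2).
Definition in_lattice (x : R * R) : Prop := exists m n : Z, x = lattice_vec m n.
Definition in_pline (x : R * R) : Prop := exists a : Z, x = lattice_vec a 0.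
Notation qvec := (lattice_vec 0).

(* Coordinates in the basis (p, q) by Cramer's rule; their integer parts are exact
   only on lattice points. *)
Definition rcoord1 (x : R * R) : R := (q2 * fst x - q1 * snd x) / (p1 * q2 - q1 * p2).
Definition rcoord2 (x : R * R) : R := (p1 * snd x - p2 * fst x) / (p1 * q2 - q1 * p2).
Definition coord1 (x : R * R) : Z := Int_part (rcoord1 x).
Definition coord2 (x : R * R) : Z := Int_part (rcoord2 x).

Lemma rcoord1_vec m n : rcoord1 (lattice_vec m n) = IZR m.
Proof. unfold rcoord1; simpl; field; exact det_neq0. Qed.
Lemma rcoord2_vec m n : rcoord2 (lattice_vec m n) = IZR n.
Proof. unfold rcoord2; simpl; field; exact det_neq0. Qed.

Lemma coord1_vec m n : coord1 (lattice_vec m n) = m.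
Proof. unfold coord1; rewrite rcoord1_vec; apply Int_part_IZR. Qed.
Lemma coord2_vec m n : coord2 (lattice_vec m n) = n.
Proof. unfold coord2; rewrite rcoord2_vec; apply Int_part_IZR. Qed.

Lemma vadd_lattice_vec m n m' n' :
  vadd (lattice_vec m n) (lattice_vec m' n') = lattice_vec (m + m') (n + n').
Proof. apply pair_eq; simpl; rewrite !plus_IZR; ring. Qed.
Lemma lattice_vec_0 : lattice_vec 0 0 = (0, 0).
Proof. apply pair_eq; simpl; ring. Qed.
Lemma vadd_pline_qvec a k : vadd (lattice_vec a 0) (qvec k) = lattice_vec a k.
Proof. rewrite vadd_lattice_vec; f_equal; lia. Qed.

Lemma in_lattice_vec m n : in_lattice (lattice_vec m n).
Proof. exists m, n; reflexivity. Qed.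
Lemma in_lattice_add x y : in_lattice x -> in_lattice y -> in_lattice (vadd x y).
Proof. intros [m [n ->]] [m' [n' ->]]. rewrite vadd_lattice_vec; apply in_lattice_vec. Qed.
Lemma in_lattice_0 : in_lattice (0, 0).
Proof. rewrite <- lattice_vec_0; apply in_lattice_vec. Qed.
Lemma in_pline_lattice x : in_pline x -> in_lattice x.
Proof. intros [a ->]; apply in_lattice_vec. Qed.
Lemma in_pline_add x y : in_pline x -> in_pline y -> in_pline (vadd x y).
Proof. intros [a ->] [b ->]. exists (a + b)%Z. rewrite vadd_lattice_vec; reflexivity. Qed.
Lemma in_pline_0 : in_pline (0, 0).
Proof. exists 0%Z. symmetry; apply lattice_vec_0. Qed.
Lemma qvec_add k l : vadd (qvec k) (qvec l) = qvec (k + l).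
Proof. apply vadd_lattice_vec. Qed.

Let pline_nf (x : R * R) : R * R := lattice_vec (coord1 x) 0.
Lemma pline_nf_mul x k : in_pline x -> pline_nf (vadd x (qvec k)) = x.
Proof. intros [a ->]. unfold pline_nf. rewrite vadd_pline_qvec, coord1_vec; reflexivity. Qed.
Lemma coord2_mul x k : in_pline x -> coord2 (vadd x (qvec k)) = k.
Proof. intros [a ->]. rewrite vadd_pline_qvec, coord2_vec; reflexivity. Qed.

Notation lattice_cocycle := (cocycle_modZ in_lattice vadd).
Notation lattice_cohomologous := (cohomologous_modZ in_lattice vadd).

Lemma lattice_cocycle_modZ_normalize Phi : lattice_cocycle Phi ->
  exists F, lattice_cohomologous Phi F /\ lattice_cocycle F /\ normal_modZ in_pline qvec F /\
    forall a b, eqz (F (lattice_vec a 0) (lattice_vec b 0)) 0.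
Proof.
  intro Hc.
  destruct (cocycle_modZ_normalize in_lattice vadd (0, 0) in_lattice_add vadd_assoc in_lattice_0
     vadd_0l vadd_0r in_pline qvec pline_nf coord2 in_pline_lattice in_pline_0
     (fun k => in_lattice_vec 0 k) qvec_add lattice_vec_0 pline_nf_mul coord2_mul Phi Hc)
    as [F1 [C1 [Hc1 [N11 N12]]]].
  destruct (Z_cocycle_modZ_trivial (fun a b => F1 (lattice_vec a 0) (lattice_vec b 0))) as [bz Hbz].
  { intros a b c _ _ _. pose proof (Hc1 (lattice_vec a 0) (lattice_vec b 0) (lattice_vec c 0)) as H.
    rewrite !vadd_lattice_vec in H. apply H; apply in_lattice_vec. }
  set (F2 := fun x y => F1 x y - (bz (coord1 x) + bz (coord1 y) - bz (coord1 (vadd x y)))).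
  assert (C2 : lattice_cohomologous F1 F2).
  { apply (cohomologous_modZ_coboundary _ _ _ _ (fun x => bz (coord1 x))). intros; unfold F2; ring. }
  exists F2. split; [apply (cohomologous_modZ_trans _ _ _ F1); auto|].
  split; [apply (cocycle_modZ_cohomologous _ _ in_lattice_add vadd_assoc F1); auto|].
  assert (Hbz0 : eqz (bz 0%Z) 0).
  { pose proof (Hbz 0%Z 0%Z I I) as H. simpl in H. rewrite lattice_vec_0 in H.
    pose proof (N12 0%Z 0%Z) as H'. rewrite lattice_vec_0 in H'.
    eqz_by (H' ⊖ H). }
  split; [split|].
  - intros n k [a ->]. unfold F2. rewrite vadd_pline_qvec, !coord1_vec.
    eqz_by (N11 _ k (ex_intro _ a eq_refl) ⊖ Hbz0).
  - intros k l. unfold F2. rewrite qvec_add, !coord1_vec.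
    eqz_by (N12 k l ⊖ Hbz0).
  - intros a b. unfold F2. rewrite vadd_lattice_vec, !coord1_vec. eqz_by (Hbz a b I I).
Qed.

(* The antisymmetric parts of [rcoord2 x * rcoord1 y] and [- x1 y2 / det] agree, so
   their difference is a symmetric bilinear form, hence a coboundary. *)
Lemma rcoord_form_cohomologous f0 :
  lattice_cohomologous (fun x y => f0 * rcoord2 x * rcoord1 y)
    (fun x y => - f0 / (p1 * q2 - q1 * p2) * fst x * snd y).
Proof.
  apply (cohomologous_modZ_coboundary _ _ _ _
    (fun x => - (f0 * rcoord2 x * rcoord1 x + f0 / (p1 * q2 - q1 * p2) * fst x * snd x) / 2)).
  intros x y. unfold rcoord1, rcoord2, vadd; simpl. field. exact det_neq0.
Qed.

Lemma lattice_cocycle_modZ_bilinear Phi : lattice_cocycle Phi ->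
  exists r, lattice_cohomologous Phi (fun x y => r * fst x * snd y).
Proof.
  intro Hc.
  destruct (lattice_cocycle_modZ_normalize Phi Hc) as [F [C [HcF [[N1 N2] NP]]]].
  assert (Dec : forall a b k l, eqz (F (lattice_vec a k) (lattice_vec b l))
                                   (F (qvec k) (lattice_vec b 0))).
  { intros a b k l. rewrite <- (vadd_pline_qvec a k), <- (vadd_pline_qvec b l).
    pose proof (normal_cocycle_modZ_decomp in_lattice vadd in_lattice_add vadd_assoc in_pline qvec
      (fun _ x => x) in_pline_lattice in_pline_add (fun k => in_lattice_vec 0 k) qvec_add
      (fun _ _ H => H) (fun _ _ _ => vadd_comm _ _) F HcF (conj N1 N2)
      _ _ k l (ex_intro _ a eq_refl) (ex_intro _ b eq_refl)) as H.
    cbv beta in H. eqz_by (H ⊕ NP a b). }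
  set (B := fun k b => F (qvec k) (lattice_vec b 0)).
  assert (Hadd_b : forall k a b, eqz (B k (a + b)%Z) (B k a + B k b)).
  { intros k a b. pose proof (HcF (qvec k) (lattice_vec a 0) (lattice_vec b 0)
      (in_lattice_vec 0 k) (in_lattice_vec a 0) (in_lattice_vec b 0)) as H.
    rewrite (vadd_comm (qvec k)), vadd_pline_qvec, vadd_lattice_vec, Z.add_0_r in H.
    unfold B. eqz_by (Dec a b k 0%Z ⊖ H ⊖ NP a b). }
  assert (Hadd_k : forall k l a, eqz (B (k + l)%Z a) (B k a + B l a)).
  { intros k l a. pose proof (HcF (qvec k) (qvec l) (lattice_vec a 0)
      (in_lattice_vec 0 k) (in_lattice_vec 0 l) (in_lattice_vec a 0)) as H.
    rewrite qvec_add, (vadd_comm (qvec l)), vadd_pline_qvec in H.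
    unfold B. eqz_by (H ⊖ N2 k l ⊕ Dec 0%Z a k l). }
  set (f0 := B 1%Z 1%Z).
  assert (Hlin : forall k b, eqz (B k b) (IZR b * (IZR k * f0))).
  { intros k b. eapply eqz_trans; [apply (Z_additive_modZ_linear (B k)); intros; apply Hadd_b|].
    apply eqz_mulz. apply (Z_additive_modZ_linear (fun k => B k 1%Z)). intros; apply Hadd_k. }
  exists (- f0 / (p1 * q2 - q1 * p2)).
  apply (cohomologous_modZ_trans _ _ _ F); auto.
  apply (cohomologous_modZ_trans _ _ _ (fun x y => f0 * rcoord2 x * rcoord1 y));
    [|apply rcoord_form_cohomologous].
  apply cohomologous_modZ_pointwise. intros x y [a [k ->]] [b [l ->]].
  rewrite rcoord2_vec, rcoord1_vec. pose proof (Hlin k b) as L. unfold B in L. eqz_by (Dec a b k l ⊕ L).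
Qed.

Lemma lattice_hom_modZ_linear (h : R * R -> R) :
  (forall x y, in_lattice x -> in_lattice y -> eqz (h (vadd x y)) (h x + h y)) ->
  exists u1 u2, forall x, in_lattice x -> eqz (h x) (u1 * fst x + u2 * snd x).
Proof.
  intro Hh.
  set (hp := h (lattice_vec 1 0)). set (hq := h (qvec 1)).
  exists ((hp * q2 - hq * p2) / (p1 * q2 - q1 * p2)), ((hq * p1 - hp * q1) / (p1 * q2 - q1 * p2)).
  intros x [m [n ->]].
  assert (Hp : forall a, eqz (h (lattice_vec a 0)) (IZR a * hp)).
  { apply (Z_additive_modZ_linear (fun a => h (lattice_vec a 0))). intros a b.
    rewrite <- (Z.add_0_r 0) at 1. rewrite <- vadd_lattice_vec. apply Hh; apply in_lattice_vec. }
  assert (Hq : forall k, eqz (h (qvec k)) (IZR k * hq)).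
  { apply (Z_additive_modZ_linear (fun k => h (qvec k))). intros k l.
    rewrite <- qvec_add. apply Hh; apply in_lattice_vec. }
  rewrite <- vadd_pline_qvec.
  pose proof (Hh _ _ (in_lattice_vec m 0) (in_lattice_vec 0 n)) as H.
  rewrite vadd_pline_qvec in H |- *.
  apply (eqz_trans _ _ _ H). eapply eqz_trans; [apply eqz_add; [apply Hp|apply Hq]|].
  apply eqz_eq. simpl. field. exact det_neq0.
Qed.

End Lattice.

Lemma inverse_eigen_relations s a b c d x y :
  s <> 0 -> IZR a * IZR d - IZR b * IZR c = 1 ->
  s * x = IZR a * x + IZR b * y -> s * y = IZR c * x + IZR d * y ->
  / s * x = IZR d * x + - IZR b * y /\ / s * y = - IZR c * x + IZR a * y.
Proof.
  intros Hs Hdet Hx Hy. split; apply (Rmult_eq_reg_l s); auto;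
    rewrite <- Rmult_assoc, Rinv_r, Rmult_1_l by auto.
  - transitivity ((IZR a * IZR d - IZR b * IZR c) * x); [rewrite Hdet; ring|].
    transitivity (IZR d * (s * x) - IZR b * (s * y)); [rewrite Hx, Hy|]; ring.
  - transitivity ((IZR a * IZR d - IZR b * IZR c) * y); [rewrite Hdet; ring|].
    transitivity (IZR a * (s * y) - IZR c * (s * x)); [rewrite Hx, Hy|]; ring.
Qed.

Section LatticeAutomorphism.
Variables p1 p2 q1 q2 : R.
Hypothesis det_neq0 : p1 * q2 - q1 * p2 <> 0.

Lemma lattice_diag_closed s1 s2 a b c d :
  s1 * p1 = IZR a * p1 + IZR b * q1 -> s2 * p2 = IZR a * p2 + IZR b * q2 ->
  s1 * q1 = IZR c * p1 + IZR d * q1 -> s2 * q2 = IZR c * p2 + IZR d * q2 ->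
  forall x, in_lattice p1 p2 q1 q2 x -> in_lattice p1 p2 q1 q2 (s1 * fst x, s2 * snd x).
Proof.
  intros Hp1 Hp2 Hq1 Hq2 x [m [n ->]]. exists (m * a + n * c)%Z, (m * b + n * d)%Z.
  apply pair_eq; simpl; rewrite !plus_IZR, !mult_IZR.
  - replace (s1 * (IZR m * p1 + IZR n * q1)) with (IZR m * (s1 * p1) + IZR n * (s1 * q1)) by ring.
    rewrite Hp1, Hq1; ring.
  - replace (s2 * (IZR m * p2 + IZR n * q2)) with (IZR m * (s2 * p2) + IZR n * (s2 * q2)) by ring.
    rewrite Hp2, Hq2; ring.
Qed.

(* Comparing determinants of both sides of [diag(s1, s2) B = M B], where [B] has rows p and q. *)
Lemma lattice_diag_det s1 s2 a b c d :
  s1 * s2 = 1 ->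
  s1 * p1 = IZR a * p1 + IZR b * q1 -> s2 * p2 = IZR a * p2 + IZR b * q2 ->
  s1 * q1 = IZR c * p1 + IZR d * q1 -> s2 * q2 = IZR c * p2 + IZR d * q2 ->
  IZR a * IZR d - IZR b * IZR c = 1.
Proof.
  intros Hs Hp1 Hp2 Hq1 Hq2. apply (Rmult_eq_reg_r (p1 * q2 - q1 * p2)); [|exact det_neq0].
  transitivity ((IZR a * p1 + IZR b * q1) * (IZR c * p2 + IZR d * q2)
                - (IZR c * p1 + IZR d * q1) * (IZR a * p2 + IZR b * q2)); [ring|].
  rewrite <- Hp1, <- Hp2, <- Hq1, <- Hq2.
  transitivity (s1 * s2 * (p1 * q2 - q1 * p2)); [ring|]. rewrite Hs; ring.
Qed.

Lemma lattice_diag_inverse s1 s2 a b c d :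
  s1 <> 0 -> s2 <> 0 -> s1 * s2 = 1 ->
  s1 * p1 = IZR a * p1 + IZR b * q1 -> s2 * p2 = IZR a * p2 + IZR b * q2 ->
  s1 * q1 = IZR c * p1 + IZR d * q1 -> s2 * q2 = IZR c * p2 + IZR d * q2 ->
  forall x, in_lattice p1 p2 q1 q2 x -> in_lattice p1 p2 q1 q2 (/ s1 * fst x, / s2 * snd x).
Proof.
  intros Hs1 Hs2 Hs Hp1 Hp2 Hq1 Hq2.
  pose proof (lattice_diag_det _ _ _ _ _ _ Hs Hp1 Hp2 Hq1 Hq2) as Hdet.
  destruct (inverse_eigen_relations _ _ _ _ _ _ _ Hs1 Hdet Hp1 Hq1) as [Hp1' Hq1'].
  destruct (inverse_eigen_relations _ _ _ _ _ _ _ Hs2 Hdet Hp2 Hq2) as [Hp2' Hq2'].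
  apply (lattice_diag_closed _ _ d (- b) (- c) a); rewrite opp_IZR; auto.
Qed.

End LatticeAutomorphism.

Lemma gam_eq (x1 x2 y1 y2 : R) (k l : Z) :
  x1 = y1 -> x2 = y2 -> k = l -> (((x1, x2), k) : Gam) = ((y1, y2), l).
Proof. intros -> -> ->; reflexivity. Qed.

Section SkewProduct.
Variables e p1 p2 q1 q2 : R.
Hypothesis e_neq0 : e <> 0.
Hypothesis e_neq1 : e <> 1.
Hypothesis det_neq0 : p1 * q2 - q1 * p2 <> 0.
Notation L := (in_lattice p1 p2 q1 q2).
Hypothesis A_closed : forall x, L x -> L (e * fst x, / e * snd x).
Hypothesis Ainv_closed : forall x, L x -> L (/ e * fst x, e * snd x).

Lemma Apow_0 x : Apow e 0 x = x.
Proof. destruct x; apply pair_eq; simpl; ring. Qed.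

Lemma Apow_add k l x : Apow e (k + l) x = Apow e k (Apow e l x).
Proof.
  unfold Apow; simpl. rewrite Z.opp_add_distr, !powerRZ_add by auto. apply pair_eq; ring.
Qed.

Lemma lattice_Apow k x : L x -> L (Apow e k x).
Proof.
  revert x; induction k as [|k IH|k IH] using Z.peano_ind; intros x Hx.
  - rewrite Apow_0; exact Hx.
  - rewrite <- Z.add_1_l, Apow_add.
    replace (Apow e 1 (Apow e k x)) with (e * fst (Apow e k x), / e * snd (Apow e k x))
      by (apply pair_eq; simpl; field; auto).
    apply A_closed, IH, Hx.
  - replace (Z.pred k) with (-1 + k)%Z by lia. rewrite Apow_add.
    replace (Apow e (-1) (Apow e k x)) with (/ e * fst (Apow e k x), e * snd (Apow e k x))
      by (apply pair_eq; simpl; field; auto).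
    apply Ainv_closed, IH, Hx.
Qed.

Notation mul := (Gmul e).
Definition in_skew (g : Gam) : Prop := L (fst g).
Definition in_skew_lattice (g : Gam) : Prop := L (fst g) /\ snd g = 0%Z.
Definition tG (k : Z) : Gam := ((0, 0), k).
Definition skew_act (k : Z) (g : Gam) : Gam := (Apow e k (fst g), 0%Z).

Lemma fst_Gmul g h : fst (mul g h) = vadd (fst g) (Apow e (snd g) (fst h)).
Proof. reflexivity. Qed.

Lemma Gmul_closed g h : in_skew g -> in_skew h -> in_skew (mul g h).
Proof. unfold in_skew; intros; rewrite fst_Gmul. apply in_lattice_add, lattice_Apow; auto. Qed.

Lemma Gmul_assoc g h k : mul (mul g h) k = mul g (mul h k).
Proof.
  destruct g as [[x1 x2] i], h as [[y1 y2] j], k as [[z1 z2] l].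
  unfold Gmul, Apow; simpl. rewrite Z.opp_add_distr, !powerRZ_add by auto.
  apply gam_eq; [ring|ring|lia].
Qed.

Lemma Gmul_1g g : mul (tG 0) g = g.
Proof. destruct g as [[x1 x2] i]. apply gam_eq; simpl; ring. Qed.
Lemma Gmul_g1 g : mul g (tG 0) = g.
Proof. destruct g as [[x1 x2] i]. apply gam_eq; simpl; ring. Qed.
Lemma tG_add k l : mul (tG k) (tG l) = tG (k + l).
Proof. apply gam_eq; simpl; ring. Qed.
Lemma Gam_decomp x k : ((x, k) : Gam) = mul (x, 0%Z) (tG k).
Proof. destruct x; apply gam_eq; simpl; ring. Qed.
Lemma Gmul_lattice x y : mul (x, 0%Z) (y, 0%Z) = (vadd x y, 0%Z).
Proof. destruct y; apply gam_eq; simpl; ring. Qed.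
Lemma tG_conj k n : in_skew_lattice n -> mul (tG k) n = mul (skew_act k n) (tG k).
Proof.
  destruct n as [[x1 x2] i]; intros [_ Hi]; simpl in Hi; subst.
  apply gam_eq; simpl; ring.
Qed.

Lemma in_skew_lattice_mul n m :
  in_skew_lattice n -> in_skew_lattice m -> in_skew_lattice (mul n m).
Proof.
  intros [Hn Hn0] [Hm Hm0]; split; [apply Gmul_closed; auto|]. simpl; rewrite Hn0, Hm0; reflexivity.
Qed.

Lemma skew_nf_mul n k : in_skew_lattice n -> (fst (mul n (tG k)), 0%Z) = n.
Proof. destruct n as [[x1 x2] i]; intros [_ Hi]; simpl in Hi; subst. apply gam_eq; simpl; ring. Qed.
Lemma skew_kf_mul n k : in_skew_lattice n -> snd (mul n (tG k)) = k.
Proof. destruct n as [[x1 x2] i]; intros [_ Hi]; simpl in Hi; subst. simpl; lia. Qed.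

Notation skew_cocycle := (cocycle_modZ in_skew mul).
Notation skew_cohomologous := (cohomologous_modZ in_skew mul).
Notation skew_normal := (normal_modZ in_skew_lattice tG).

Let skew_normalize := cocycle_modZ_normalize in_skew mul (tG 0) Gmul_closed Gmul_assoc
  (in_lattice_0 _ _ _ _) Gmul_1g Gmul_g1 in_skew_lattice tG (fun g => (fst g, 0%Z)) snd
  (fun n Hn => proj1 Hn) (conj (in_lattice_0 _ _ _ _) eq_refl) (fun _ => in_lattice_0 _ _ _ _)
  tG_add eq_refl skew_nf_mul skew_kf_mul.

Let skew_decomp := normal_cocycle_modZ_decomp in_skew mul Gmul_closed Gmul_assoc
  in_skew_lattice tG skew_act (fun n Hn => proj1 Hn) in_skew_lattice_mul (fun _ => in_lattice_0 _ _ _ _)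
  tG_add (fun k n Hn => conj (lattice_Apow k _ (proj1 Hn)) eq_refl) tG_conj.

Definition zeta (r : R) (g h : Gam) : R := r * fst (fst g) * (powerRZ e (- snd g) * snd (fst h)).

Lemma zeta_cocycle r g h k : zeta r g h + zeta r (mul g h) k = zeta r h k + zeta r g (mul h k).
Proof.
  destruct g as [[x1 x2] i], h as [[y1 y2] j], k as [[z1 z2] l]. unfold zeta, Gmul, Apow; simpl.
  rewrite !Z.opp_add_distr, !powerRZ_add by auto.
  assert (Hi : powerRZ e i * powerRZ e (- i) = 1).
  { rewrite <- powerRZ_add, Z.add_opp_diag_r by auto. reflexivity. }
  transitivity (r * x1 * (powerRZ e (- i) * y2) + r * x1 * (powerRZ e (- i) * powerRZ e (- j) * z2)
                + r * y1 * (powerRZ e i * powerRZ e (- i)) * (powerRZ e (- j) * z2)); [ring|].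
  rewrite Hi; ring.
Qed.

(* By [adapted_decomp], an adapted cocycle differs from [zeta r] only through its
   values [th (tG k) (m, 0)]. *)
Definition adapted (r : R) (th : Gam -> Gam -> R) : Prop :=
  skew_cocycle th /\ skew_normal th /\
  forall x y, L x -> L y -> eqz (th (x, 0%Z) (y, 0%Z)) (r * fst x * snd y).

Definition sub_fst_coboundary (c : R * R -> R) (th : Gam -> Gam -> R) (g h : Gam) : R :=
  th g h - (c (fst g) + c (fst h) - c (fst (mul g h))).

Lemma sub_fst_coboundary_normal c th :
  skew_cocycle th -> skew_normal th -> eqz (c (0, 0)) 0 ->
  skew_cohomologous th (sub_fst_coboundary c th) /\ skew_cocycle (sub_fst_coboundary c th) /\
  skew_normal (sub_fst_coboundary c th).
Proof.
  intros Hc [N1 N2] Hc0.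
  assert (C : skew_cohomologous th (sub_fst_coboundary c th)).
  { apply (cohomologous_modZ_coboundary _ _ _ _ (fun g => c (fst g))).
    intros; unfold sub_fst_coboundary; ring. }
  split; [exact C|]. split; [exact (cocycle_modZ_cohomologous _ _ Gmul_closed Gmul_assoc _ _ Hc C)|].
  split; unfold sub_fst_coboundary.
  - intros [x i] k [Hx Hi]; simpl in Hi; subst i. rewrite <- Gam_decomp. simpl fst.
    eqz_by (N1 (x, 0%Z) k (conj Hx eq_refl) ⊖ Hc0).
  - intros k l. rewrite tG_add. simpl fst. eqz_by (N2 k l ⊖ Hc0).
Qed.

Lemma adapted_exists th : skew_cocycle th ->
  exists r th', skew_cohomologous th th' /\ adapted r th'.
Proof.
  intro Hc.
  destruct (skew_normalize th Hc) as [th1 [C1 [Hc1 Hn1]]].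
  destruct (lattice_cocycle_modZ_bilinear p1 p2 q1 q2 det_neq0 (fun x y => th1 (x, 0%Z) (y, 0%Z)))
    as [r [c Hr]].
  { intros x y z Hx Hy Hz. pose proof (Hc1 (x, 0%Z) (y, 0%Z) (z, 0%Z) Hx Hy Hz) as H.
    rewrite !Gmul_lattice in H. exact H. }
  assert (Hc0 : eqz (c (0, 0)) 0).
  { pose proof (Hr (0, 0) (0, 0) (in_lattice_0 _ _ _ _) (in_lattice_0 _ _ _ _)) as H.
    pose proof (proj2 Hn1 0%Z 0%Z) as N. unfold tG in N. rewrite vadd_0l in H. simpl in H.
    eqz_by (N ⊖ H). }
  destruct (sub_fst_coboundary_normal c th1 Hc1 Hn1 Hc0) as [C2 [Hc2 Hn2]].
  exists r, (sub_fst_coboundary c th1). split; [apply (cohomologous_modZ_trans _ _ _ th1); auto|].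
  split; [exact Hc2|]. split; [exact Hn2|].
  intros x y Hx Hy. unfold sub_fst_coboundary. rewrite Gmul_lattice. simpl fst.
  eqz_by (Hr x y Hx Hy).
Qed.

Lemma adapted_decomp r th : adapted r th -> forall x y k l, L x -> L y ->
  eqz (th (x, k) (y, l)) (th (tG k) (y, 0%Z) + zeta r (x, k) (y, l)).
Proof.
  intros [Hc [Hn HL]] x y k l Hx Hy.
  pose proof (skew_decomp th Hc Hn (x, 0%Z) (y, 0%Z) k l (conj Hx eq_refl) (conj Hy eq_refl)) as D.
  rewrite <- !Gam_decomp in D.
  pose proof (HL x _ Hx (lattice_Apow k y Hy)) as Q.
  unfold skew_act, zeta, Apow in *; simpl in *. eqz_by (D ⊕ Q).
Qed.

Lemma Gmul_tG_lattice k m : mul (tG k) (m, 0%Z) = (Apow e k m, k).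
Proof. destruct m; unfold Apow; apply gam_eq; simpl; ring. Qed.

Lemma adapted_twist_additive r th : adapted r th -> forall x y, L x -> L y ->
  eqz (th (tG 1) (vadd x y, 0%Z)) (th (tG 1) (x, 0%Z) + th (tG 1) (y, 0%Z)).
Proof.
  intros Ha x y Hx Hy. pose proof Ha as [Hc [_ HL]].
  pose proof (Hc (tG 1) (x, 0%Z) (y, 0%Z) (in_lattice_0 _ _ _ _) Hx Hy) as C.
  rewrite Gmul_tG_lattice, Gmul_lattice in C.
  pose proof (adapted_decomp r th Ha _ y 1%Z 0%Z (lattice_Apow 1 x Hx) Hy) as D.
  replace (zeta r (Apow e 1 x, 1%Z) (y, 0%Z)) with (r * fst x * snd y) in D
    by (unfold zeta, Apow; simpl; field; auto).
  eqz_by (D ⊖ C ⊖ HL x y Hx Hy).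
Qed.

Lemma adapted_untwist r th : adapted r th ->
  exists th', skew_cohomologous th th' /\ adapted r th' /\
    forall m, L m -> eqz (th' (tG 1) (m, 0%Z)) 0.
Proof.
  intros Ha. pose proof Ha as [Hc [Hn HL]].
  destruct (lattice_hom_modZ_linear p1 p2 q1 q2 det_neq0 (fun m => th (tG 1) (m, 0%Z))
              (adapted_twist_additive r th Ha)) as [u1 [u2 Hu]].
  (* [w] solves [w (A m) - w m = - (u1 m1 + u2 m2)], which is where [e <> 1] is needed. *)
  set (w := fun x : R * R => u1 / (1 - e) * fst x + u2 / (1 - / e) * snd x).
  destruct (sub_fst_coboundary_normal w th Hc Hn) as [C [Hc' Hn']].
  { apply eqz_eq; unfold w; simpl; ring. }
  exists (sub_fst_coboundary w th). split; [exact C|]. split; [split; [exact Hc'|split; [exact Hn'|]]|].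
  - intros x y Hx Hy. unfold sub_fst_coboundary. rewrite Gmul_lattice.
    unfold w; simpl. eqz_by (HL x y Hx Hy).
  - intros m Hm. unfold sub_fst_coboundary. rewrite Gmul_tG_lattice.
    apply (eqz_trans _ (u1 * fst m + u2 * snd m - (w (0, 0) + w m - w (Apow e 1 m)))).
    + simpl fst. eqz_by (Hu m Hm).
    + apply eqz_eq. unfold w, Apow; simpl. field.
      repeat split; auto; intro; apply e_neq1; lra.
Qed.

Lemma adapted_twist_vanishes r th : adapted r th ->
  (forall m, L m -> eqz (th (tG 1) (m, 0%Z)) 0) ->
  forall k m, L m -> eqz (th (tG k) (m, 0%Z)) 0.
Proof.
  intros Ha H1. pose proof Ha as [Hc [[_ N2] HL]].
  assert (Rec : forall k m, L m -> eqz (th (tG (1 + k)) (m, 0%Z)) (th (tG k) (m, 0%Z))).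
  { intros k m Hm.
    pose proof (Hc (tG 1) (tG k) (m, 0%Z) (in_lattice_0 _ _ _ _) (in_lattice_0 _ _ _ _) Hm) as C.
    rewrite tG_add, Gmul_tG_lattice in C.
    pose proof (adapted_decomp r th Ha (0, 0) _ 1%Z k (in_lattice_0 _ _ _ _) (lattice_Apow k m Hm)) as D.
    pose proof (H1 _ (lattice_Apow k m Hm)) as V.
    pose proof (N2 1%Z k) as N. unfold zeta, tG in *; simpl in D.
    eqz_by (C ⊖ N ⊕ D ⊕ V). }
  intro k; induction k as [|k IH|k IH] using Z.peano_ind; intros m Hm.
  - pose proof (HL (0, 0) m (in_lattice_0 _ _ _ _) Hm) as H. unfold tG. simpl in H. eqz_by H.
  - rewrite <- Z.add_1_l. exact (eqz_trans _ _ _ (Rec k m Hm) (IH m Hm)).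
  - pose proof (Rec (Z.pred k) m Hm) as H. replace (1 + Z.pred k)%Z with k in H by lia.
    exact (eqz_trans _ _ _ (eqz_sym _ _ H) (IH m Hm)).
Qed.

Theorem skew_cocycle_modZ_zeta th : skew_cocycle th -> exists r, skew_cohomologous th (zeta r).
Proof.
  intro Hc.
  destruct (adapted_exists th Hc) as [r [th1 [C1 Ha1]]].
  destruct (adapted_untwist r th1 Ha1) as [th2 [C2 [Ha2 H2]]].
  exists r. apply (cohomologous_modZ_trans _ _ _ th1); auto.
  apply (cohomologous_modZ_trans _ _ _ th2); auto.
  apply cohomologous_modZ_pointwise. intros [x k] [y l] Hx Hy.
  eqz_by (adapted_decomp r th2 Ha2 x y k l Hx Hy ⊕ adapted_twist_vanishes r th2 Ha2 H2 k y Hy).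
Qed.

End SkewProduct.

Lemma cocycle_modZ_ext {T : Type} (P Q : T -> Prop) mul th :
  (forall g, Q g -> P g) -> cocycle_modZ P mul th -> cocycle_modZ Q mul th.
Proof. intros HQP Hc g h k Hg Hh Hk. apply Hc; auto. Qed.

Lemma cohomologous_modZ_ext {T : Type} (P Q : T -> Prop) mul th th' :
  (forall g, Q g -> P g) -> cohomologous_modZ P mul th th' -> cohomologous_modZ Q mul th th'.
Proof. intros HQP [b Hb]. exists b. intros g h Hg Hh. apply Hb; auto. Qed.

Lemma U1_cocycle_log (inG : Gam -> Prop) mul sigma :
  (forall g h, inG g -> inG h -> inG (mul g h)) ->
  is_U1_cocycle inG mul sigma ->
  exists th, cocycle_modZ inG mul th /\
    forall g h, inG g -> inG h -> sigma g h = e2pi (th g h).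
Proof.
  intros Hmul [Hmod Hc]. destruct (U1_valued_log inG sigma Hmod) as [th Hth].
  exists th. split; [|exact Hth].
  intros g h k Hg Hh Hk. apply e2pi_inj. rewrite !e2pi_add, <- !Hth; auto.
Qed.

Lemma cohomologous_of_modZ (inG : Gam -> Prop) mul sigma th zeta :
  (forall g h, inG g -> inG h -> sigma g h = e2pi (th g h)) ->
  cohomologous_modZ inG mul th zeta ->
  cohomologous inG mul sigma (fun g h => e2pi (zeta g h)).
Proof.
  intros Hth [b Hb]. exists (fun g => e2pi (b g)). split; [intros; apply Cmod_e2pi|].
  intros g h Hg Hh. rewrite Hth, (e2pi_eqz _ _ (Hb g h Hg Hh)), Cinv_e2pi, <- !e2pi_add by auto.
  f_equal; ring.
Qed.

Lemma Q2R_inject_Z z : Q2R (inject_Z z) = IZR z.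
Proof. unfold Q2R, inject_Z; simpl. field. Qed.

Section Embeddings.
Variable d : nat.

Let sqrt_d_sqr : sqrt (INR d) * sqrt (INR d) = IZR (Z.of_nat d).
Proof. rewrite <- INR_IZR_INZ. apply sqrt_sqrt, pos_INR. Qed.

Lemma iota1_mul x y : iota1 d (Kmul d x y) = iota1 d x * iota1 d y.
Proof.
  unfold iota1, Kmul; simpl. rewrite !Q2R_plus, !Q2R_mult, Q2R_inject_Z, <- sqrt_d_sqr. ring.
Qed.
Lemma iota2_mul x y : iota2 d (Kmul d x y) = iota2 d x * iota2 d y.
Proof.
  unfold iota2, Kmul; simpl. rewrite !Q2R_plus, !Q2R_mult, Q2R_inject_Z, <- sqrt_d_sqr. ring.
Qed.
Lemma iota1_Zcomb m n w1 w2 : iota1 d (Zcomb m n w1 w2) = IZR m * iota1 d w1 + IZR n * iota1 d w2.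
Proof. unfold iota1, Zcomb; simpl. rewrite !Q2R_plus, !Q2R_mult, !Q2R_inject_Z. ring. Qed.
Lemma iota2_Zcomb m n w1 w2 : iota2 d (Zcomb m n w1 w2) = IZR m * iota2 d w1 + IZR n * iota2 d w2.
Proof. unfold iota2, Zcomb; simpl. rewrite !Q2R_plus, !Q2R_mult, !Q2R_inject_Z. ring. Qed.
Lemma iota1_Keq x y : Keq x y -> iota1 d x = iota1 d y.
Proof. intros [H1 H2]; unfold iota1; rewrite (Qeq_eqR _ _ H1), (Qeq_eqR _ _ H2); reflexivity. Qed.
Lemma iota2_Keq x y : Keq x y -> iota2 d x = iota2 d y.
Proof. intros [H1 H2]; unfold iota2; rewrite (Qeq_eqR _ _ H1), (Qeq_eqR _ _ H2); reflexivity. Qed.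

Variables w1 w2 : Kel.
Notation p1 := (iota1 d w1). Notation p2 := (iota2 d w1).
Notation q1 := (iota1 d w2). Notation q2 := (iota2 d w2).

Lemma inLambda_lattice x : inLambda d w1 w2 x <-> in_lattice p1 p2 q1 q2 x.
Proof.
  split.
  - intros [l [[m [n Hl]] ->]]. exists m, n.
    rewrite (iota1_Keq _ _ Hl), (iota2_Keq _ _ Hl), iota1_Zcomb, iota2_Zcomb. reflexivity.
  - intros [m [n ->]]. exists (Zcomb m n w1 w2). split; [exists m, n; split; reflexivity|].
    rewrite iota1_Zcomb, iota2_Zcomb. reflexivity.
Qed.

Lemma embedding_det_neq0 : nonsquare d -> spans_K w1 w2 -> p1 * q2 - q1 * p2 <> 0.
Proof.
  intros Hns Hsp.
  assert (Hd : 0 < sqrt (INR d)).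
  { apply sqrt_lt_R0. destruct d; [exfalso; apply Hns; exists 0%nat; reflexivity|].
    apply lt_0_INR; lia. }
  replace (p1 * q2 - q1 * p2) with (- 2 * sqrt (INR d) * Q2R (fst w1 * snd w2 - fst w2 * snd w1))
    by (unfold iota1, iota2; rewrite Q2R_minus, !Q2R_mult; ring).
  intro H. apply Hsp, eqR_Qeq. rewrite RMicromega.Q2R_0.
  apply (Rmult_eq_reg_l (- 2 * sqrt (INR d))); [rewrite H; ring|lra].
Qed.

Lemma stabilizes_eigen_relations eps : stabilizes d w1 w2 eps ->
  exists a b c dd : Z,
    iota1 d eps * p1 = IZR a * p1 + IZR b * q1 /\ iota2 d eps * p2 = IZR a * p2 + IZR b * q2 /\
    iota1 d eps * q1 = IZR c * p1 + IZR dd * q1 /\ iota2 d eps * q2 = IZR c * p2 + IZR dd * q2.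
Proof.
  intro Hst.
  assert (Hw1 : inL w1 w2 w1) by (exists 1%Z, 0%Z; split; simpl; ring).
  assert (Hw2 : inL w1 w2 w2) by (exists 0%Z, 1%Z; split; simpl; ring).
  destruct (Hst _ Hw1) as [a [b Hab]], (Hst _ Hw2) as [c [dd Hcd]].
  exists a, b, c, dd.
  rewrite <- !iota1_mul, <- !iota2_mul, <- !iota1_Zcomb, <- !iota2_Zcomb.
  repeat split; [apply iota1_Keq|apply iota2_Keq|apply iota1_Keq|apply iota2_Keq]; assumption.
Qed.

Lemma stabilizes_lattice_diag eps :
  nonsquare d -> spans_K w1 w2 -> iota1 d eps <> 0 -> iota2 d eps = / iota1 d eps ->
  stabilizes d w1 w2 eps ->
  (forall x, in_lattice p1 p2 q1 q2 x ->
     in_lattice p1 p2 q1 q2 (iota1 d eps * fst x, / iota1 d eps * snd x)) /\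
  (forall x, in_lattice p1 p2 q1 q2 x ->
     in_lattice p1 p2 q1 q2 (/ iota1 d eps * fst x, iota1 d eps * snd x)).
Proof.
  intros Hns Hsp He0 He2 Hst.
  destruct (stabilizes_eigen_relations eps Hst) as (a & b & c & dd & M1 & M2 & M3 & M4).
  rewrite He2 in M2, M4. split; [exact (lattice_diag_closed _ _ _ _ _ _ _ _ _ _ M1 M2 M3 M4)|].
  intros x Hx. rewrite <- (Rinv_inv (iota1 d eps)) at 2.
  exact (lattice_diag_inverse _ _ _ _ (embedding_det_neq0 Hns Hsp) _ _ _ _ _ _ He0
           (Rinv_neq_0_compat _ He0) (Rinv_r _ He0) M1 M2 M3 M4 x Hx).
Qed.

Lemma inGamma_in_skew g : inGamma d w1 w2 g <-> in_skew p1 p2 q1 q2 g.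
Proof. apply inLambda_lattice. Qed.

End Embeddings.

Theorem lemma5p3 (d : nat) (w1 w2 eps : Kel) (sigma : Gam -> Gam -> C) :
  nonsquare d ->
  spans_K w1 w2 ->
  1 < iota1 d eps ->
  iota2 d eps = / iota1 d eps ->
  stabilizes d w1 w2 eps ->
  is_U1_cocycle (inGamma d w1 w2) (Gmul (iota1 d eps)) sigma ->
  exists zeta : Gam -> Gam -> R,
    is_R_cocycle (inGamma d w1 w2) (Gmul (iota1 d eps)) zeta /\
    cohomologous (inGamma d w1 w2) (Gmul (iota1 d eps)) sigma
      (fun g h => e2pi (zeta g h)).
Proof.
  intros Hns Hsp He He2 Hst Hsigma.
  set (e := iota1 d eps) in *.
  assert (He0 : e <> 0) by lra.
  pose proof (embedding_det_neq0 d w1 w2 Hns Hsp) as Hdet.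
  destruct (stabilizes_lattice_diag d w1 w2 eps Hns Hsp He0 He2 Hst) as [A Ainv].
  pose proof (inGamma_in_skew d w1 w2) as HG.
  destruct (U1_cocycle_log _ _ sigma (fun g h Hg Hh => proj2 (HG _)
              (Gmul_closed _ _ _ _ _ He0 A Ainv g h (proj1 (HG g) Hg) (proj1 (HG h) Hh))) Hsigma)
    as [th [Hth Hlog]].
  destruct (skew_cocycle_modZ_zeta e _ _ _ _ He0 ltac:(lra) Hdet A Ainv th
              (cocycle_modZ_ext _ _ _ _ (fun g => proj2 (HG g)) Hth)) as [r Hr].
  exists (zeta e r). split.
  - intros g h k _ _ _. apply zeta_cocycle, He0.
  - apply (cohomologous_of_modZ _ _ _ th); [exact Hlog|].
    exact (cohomologous_modZ_ext _ _ _ _ _ (fun g => proj1 (HG g)) Hr).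
Qed.
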